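(* Let $G$ be a closed and continuous metric cyclic graph whose vertex set $V$ is homeomorphic to $S^1$, and let $\gamma=\inf_{u\in V}\gamma_V(u)$. For every $r\in[0,\gamma]$, the map $g_r:V\to V$ is continuous.
   Context: Identify $S^1$ with $[0,1)$; $d_{S^1}(x,y)\in[0,1)$ is the normalized counterclockwise distance from $x$ to $y$, and $[x,y]_V$ denotes the set of points of $V$ on the closed counterclockwise arc from $x$ to $y$. A directed graph $G=(V,E)$ (no loops, no opposite edges) with $V\subseteq S^1$ is cyclic if whenever $u_0\to u_1$, every $w\in V$ strictly counterclockwise-between $u_0$ and $u_1$ has $u_0\to w$ and $w\to u_1$. Define $\gamma_m(u_0)=\sup\{\sum_{i=0}^{m-1}d_{S^1}(u_i,u_{i+1}):u_0\to\cdots\to u_m\text{ in }G\}$ and $f_1(u)=u+\gamma_1(u)\bmod1$. $G$ is closed if $V$ is closed in $S^1$ (then $f_1(u)\in V$), and continuous if every $\gamma_m$ is continuous. $G$ is metric if $V$ carries a metric $d_V$ inducing the subspace topology from $S^1$ such that $d_V(u_0,u_1)<d_V(u_0,u_2)$ for every directed path $u_0\to u_1\to u_2$. Set $\gamma_V(u)=d_V(u,f_1(u))$. For $r\in[0,\gamma_V(u)]$, $g_r(u)$ is the unique point $w\in[u,f_1(u)]_V$ with $d_V(u,w)=r$. *)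

From Stdlib Require Import Reals ClassicalEpsilon.
From Coquelicot Require Import Rbar Lub.
Open Scope R_scope.

(* S^1 is identified with [0,1). *)
Definition inS1 (x : R) : Prop := 0 <= x < 1.

(* normalized counterclockwise distance from x to y, in [0,1) *)
Definition dS1 (x y : R) : R := frac_part (y - x).

Definition circ_dist (x y : R) : R := Rmin (dS1 x y) (dS1 y x).

Definition cont_on (A B : R -> Prop) (f : R -> R) : Prop :=
  (forall x, A x -> B (f x)) /\
  forall x, A x -> forall eps, 0 < eps -> exists delta, 0 < delta /\
    forall y, A y -> circ_dist x y < delta -> circ_dist (f x) (f y) < eps.

Definition homeomorphic (A B : R -> Prop) : Prop :=
  exists h k : R -> R, cont_on A B h /\ cont_on B A k /\
    (forall x, A x -> k (h x) = x) /\ (forall y, B y -> h (k y) = y).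

Definition ccw_between (x w y : R) : Prop := 0 < dS1 x w < dS1 x y.

Definition digraph (V : R -> Prop) (E : R -> R -> Prop) : Prop :=
  (forall x, V x -> inS1 x) /\
  (forall u v, E u v -> V u /\ V v) /\
  (forall u, ~ E u u) /\
  (forall u v, E u v -> ~ E v u).

Definition cyclic_graph (V : R -> Prop) (E : R -> R -> Prop) : Prop :=
  digraph V E /\
  forall u0 u1, E u0 u1 -> forall w, V w -> ccw_between u0 w u1 -> E u0 w /\ E w u1.

Fixpoint path_len (u : nat -> R) (m : nat) : R :=
  match m with
  | O => 0
  | S k => path_len u k + dS1 (u k) (u (S k))
  end.

Definition is_path (E : R -> R -> Prop) (u : nat -> R) (m : nat) : Prop :=
  forall i, (i < m)%nat -> E (u i) (u (S i)).

(* gamma_m(u0) = sup of lengths of directed paths u0 -> ... -> um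
   (convention: 0 if there is no such path, i.e. the real part of -oo) *)
Definition gamma_m (E : R -> R -> Prop) (m : nat) (u0 : R) : R :=
  real (Lub_Rbar (fun s => exists u : nat -> R,
           u O = u0 /\ is_path E u m /\ s = path_len u m)).

Definition f1 (E : R -> R -> Prop) (u : R) : R := frac_part (u + gamma_m E 1 u).

Definition closed_in_S1 (V : R -> Prop) : Prop :=
  forall x, inS1 x ->
    (forall eps, 0 < eps -> exists v, V v /\ circ_dist x v < eps) -> V x.

Definition continuous_graph (V : R -> Prop) (E : R -> R -> Prop) : Prop :=
  forall m, (1 <= m)%nat ->
    forall u, V u -> forall eps, 0 < eps -> exists delta, 0 < delta /\
      forall v, V v -> circ_dist u v < delta -> Rabs (gamma_m E m v - gamma_m E m u) < eps.

Definition metric_on (V : R -> Prop) (dV : R -> R -> R) : Prop :=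
  (forall x y, V x -> V y -> 0 <= dV x y) /\
  (forall x y, V x -> V y -> (dV x y = 0 <-> x = y)) /\
  (forall x y, V x -> V y -> dV x y = dV y x) /\
  (forall x y z, V x -> V y -> V z -> dV x z <= dV x y + dV y z).

Definition induces_subspace_topology (V : R -> Prop) (dV : R -> R -> R) : Prop :=
  (forall u, V u -> forall eps, 0 < eps -> exists delta, 0 < delta /\
     forall v, V v -> circ_dist u v < delta -> dV u v < eps) /\
  (forall u, V u -> forall eps, 0 < eps -> exists delta, 0 < delta /\
     forall v, V v -> dV u v < delta -> circ_dist u v < eps).

Definition metric_graph_with (V : R -> Prop) (E : R -> R -> Prop) (dV : R -> R -> R) : Prop :=
  metric_on V dV /\ induces_subspace_topology V dV /\
  forall u0 u1 u2, E u0 u1 -> E u1 u2 -> dV u0 u1 < dV u0 u2.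

Definition gamma_V (E : R -> R -> Prop) (dV : R -> R -> R) (u : R) : R := dV u (f1 E u).

Definition in_arc (V : R -> Prop) (x y w : R) : Prop := V w /\ dS1 x w <= dS1 x y.

Definition g_r (V : R -> Prop) (E : R -> R -> Prop) (dV : R -> R -> R) (r u : R) : R :=
  epsilon (inhabits 0) (fun w =>
    (in_arc V u (f1 E u) w /\ dV u w = r) /\
    forall w', in_arc V u (f1 E u) w' /\ dV u w' = r -> w' = w).

Definition is_inf (A : R -> Prop) (g : R) : Prop :=
  (forall s, A s -> g <= s) /\ (forall b, (forall s, A s -> b <= s) -> b <= g).

From Stdlib Require Import Reals Psatz Lia Classical ClassicalEpsilon.
From Coquelicot Require Import Rbar Lub.
Open Scope R_scope.

(* Since V is a subset of S^1 homeomorphic to S^1, it is all of S^1.  Write [D u t] for the dV-distance from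
   u to the point at counterclockwise distance t.  By cyclicity, for
   0 < t1 < t2 < gamma_1(u) there are edges u -> (u + t1) -> (u + t2), so the
   metric condition makes [D u] strictly increasing on [0, gamma_1(u)]; it is
   continuous, vanishes at 0 and is at least r at gamma_1(u).  Hence
   g_r(u) = u + T(u) for the unique hitting time T(u) of level r.  Continuity of
   dV and of gamma_1 in u, together with strict monotonicity, give lower and
   upper semicontinuity of T, hence continuity of g_r. *)

Lemma frac_part_eq x y n : 0 <= y < 1 -> x = IZR n + y -> frac_part x = y.
Proof. intros Hy Hx. symmetry. exact (proj2 (Int_part_frac_part_spec x n y Hy Hx)). Qed.

Lemma frac_part_bounds x : 0 <= frac_part x < 1.
Proof. destruct (base_fp x). lra. Qed.

Lemma frac_part_add_int x n : frac_part (x + IZR n) = frac_part x.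
Proof.
  apply (frac_part_eq _ _ (Int_part x + n)); [apply frac_part_bounds|].
  rewrite plus_IZR. pose proof (Rplus_Int_part_frac_part x). lra.
Qed.

Lemma frac_part_id x : 0 <= x < 1 -> frac_part x = x.
Proof. intros Hx. apply (frac_part_eq _ _ 0); [exact Hx | simpl; ring]. Qed.

Lemma dS1_bounds x y : 0 <= dS1 x y < 1.
Proof. apply frac_part_bounds. Qed.

Lemma dS1_shift_int x y x' y' n : y' - x' = y - x + IZR n -> dS1 x' y' = dS1 x y.
Proof. intros H. unfold dS1. rewrite H. apply frac_part_add_int. Qed.

Lemma dS1_self x : dS1 x x = 0.
Proof. unfold dS1. rewrite Rminus_diag. apply fp_R0. Qed.

Definition ccw_point (u t : R) : R := frac_part (u + t).

Lemma ccw_point_inS1 u t : inS1 (ccw_point u t).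
Proof. apply frac_part_bounds. Qed.

Lemma ccw_point_int_part u t : ccw_point u t = u + t - IZR (Int_part (u + t)).
Proof. unfold ccw_point. pose proof (Rplus_Int_part_frac_part (u + t)). lra. Qed.

Lemma ccw_point_0 u : inS1 u -> ccw_point u 0 = u.
Proof. intros Hu. unfold ccw_point. rewrite Rplus_0_r. now apply frac_part_id. Qed.

Lemma ccw_point_add_int u t n : ccw_point u (t + IZR n) = ccw_point u t.
Proof. unfold ccw_point. rewrite <- Rplus_assoc. apply frac_part_add_int. Qed.

Lemma dS1_ccw_point u s t : 0 <= t - s < 1 ->
  dS1 (ccw_point u s) (ccw_point u t) = t - s.
Proof.
  intros Hst. rewrite <- (frac_part_id (t - s)) by exact Hst.
  apply (dS1_shift_int _ _ _ _ (Int_part (u + s) - Int_part (u + t))).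
  rewrite !ccw_point_int_part, minus_IZR. ring.
Qed.

Lemma dS1_to_ccw_point u t : inS1 u -> 0 <= t < 1 -> dS1 u (ccw_point u t) = t.
Proof.
  intros Hu Ht. rewrite <- (ccw_point_0 u Hu) at 1. rewrite dS1_ccw_point; lra.
Qed.

Lemma ccw_point_dS1 u w : inS1 w -> ccw_point u (dS1 u w) = w.
Proof.
  intros Hw. unfold dS1. rewrite <- (frac_part_id w) at 2 by exact Hw.
  unfold ccw_point. rewrite <- (frac_part_add_int (u + frac_part (w - u)) (Int_part (w - u))).
  f_equal. pose proof (Rplus_Int_part_frac_part (w - u)). lra.
Qed.

Lemma dS1_inj p a b : inS1 a -> inS1 b -> dS1 p a = dS1 p b -> a = b.
Proof.
  intros Ha Hb Hab. rewrite <- (ccw_point_dS1 p a Ha), <- (ccw_point_dS1 p b Hb).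
  now rewrite Hab.
Qed.

Lemma dS1_pos p y : inS1 p -> inS1 y -> y <> p -> 0 < dS1 p y.
Proof.
  intros Hp Hy Hyp. destruct (dS1_bounds p y) as [[Hpos | Hzero] _]; [exact Hpos|].
  exfalso. apply Hyp, (dS1_inj p); [exact Hy | exact Hp |]. now rewrite dS1_self.
Qed.

Lemma dS1_add_dS1 x y : dS1 x y + dS1 y x = 0 \/ dS1 x y + dS1 y x = 1.
Proof.
  unfold dS1. pose proof (frac_part_bounds (y - x)). pose proof (frac_part_bounds (x - y)).
  pose proof (Rplus_Int_part_frac_part (y - x)). pose proof (Rplus_Int_part_frac_part (x - y)).
  set (k := (- (Int_part (y - x) + Int_part (x - y)))%Z).
  assert (Hk : frac_part (y - x) + frac_part (x - y) = IZR k)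
    by (unfold k; rewrite opp_IZR, plus_IZR; lra).
  assert (Hk2 : (0 <= k < 2)%Z) by (split; [apply le_IZR | apply lt_IZR]; lra).
  destruct (Z.eq_dec k 0) as [-> | Hk1]; [left | right]; rewrite Hk; [reflexivity|].
  replace k with 1%Z by lia. reflexivity.
Qed.

Lemma circ_dist_le x y n : circ_dist x y <= Rabs (y - x - IZR n).
Proof.
  unfold circ_dist. pose proof (dS1_add_dS1 x y). pose proof (dS1_bounds y x).
  set (k := (Int_part (y - x) - n)%Z).
  assert (Hk : y - x - IZR n = IZR k + dS1 x y).
  { unfold k, dS1. rewrite minus_IZR. pose proof (Rplus_Int_part_frac_part (y - x)). lra. }
  rewrite Hk. pose proof (dS1_bounds x y).
  destruct (Z.le_gt_cases 0 k) as [Hk0 | Hk0].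
  - apply IZR_le in Hk0. rewrite Rabs_right by lra. pose proof (Rmin_l (dS1 x y) (dS1 y x)). lra.
  - assert (IZR k <= -1) by (apply IZR_le; lia).
    rewrite Rabs_left1 by lra. pose proof (Rmin_r (dS1 x y) (dS1 y x)). lra.
Qed.

Lemma circ_dist_attained x y : exists n, circ_dist x y = Rabs (y - x - IZR n).
Proof.
  unfold circ_dist. pose proof (dS1_add_dS1 x y). pose proof (dS1_bounds x y).
  assert (Hyx : y - x = IZR (Int_part (y - x)) + dS1 x y) by apply Rplus_Int_part_frac_part.
  destruct (Rle_dec (dS1 x y) (dS1 y x)) as [Hle | Hgt].
  - exists (Int_part (y - x)). rewrite Rmin_left, Rabs_right by lra. lra.
  - apply Rnot_le_lt in Hgt. pose proof (dS1_bounds y x).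
    assert (Hsum : dS1 x y + dS1 y x = 1) by (destruct H; lra).
    exists (Int_part (y - x) + 1)%Z. rewrite Rmin_right, plus_IZR, Rabs_left1 by lra. lra.
Qed.

Lemma circ_dist_refl x : circ_dist x x = 0.
Proof. unfold circ_dist. rewrite dS1_self. apply Rmin_left. lra. Qed.

Lemma circ_dist_ccw_point u v s t :
  circ_dist (ccw_point u s) (ccw_point v t) <= circ_dist u v + Rabs (t - s).
Proof.
  destruct (circ_dist_attained u v) as [n ->].
  eapply Rle_trans; [apply (circ_dist_le _ _ (n - Int_part (v + t) + Int_part (u + s))) |].
  rewrite !ccw_point_int_part, plus_IZR, !minus_IZR.
  replace (v + t - IZR (Int_part (v + t)) - (u + s - IZR (Int_part (u + s)))
           - (IZR n - IZR (Int_part (v + t)) + IZR (Int_part (u + s))))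
    with ((v - u - IZR n) + (t - s)) by ring.
  apply Rabs_triang.
Qed.

Lemma dS1_near p y y' : circ_dist y y' < dS1 p y -> circ_dist y y' < 1 - dS1 p y ->
  Rabs (dS1 p y' - dS1 p y) = circ_dist y y'.
Proof.
  intros Hlo Hhi. destruct (circ_dist_attained y y') as [n Hn]. rewrite Hn in *.
  set (d := y' - y - IZR n) in *.
  apply Rabs_def2 in Hlo. apply Rabs_def2 in Hhi.
  replace (dS1 p y') with (dS1 p y + d); [f_equal; ring|].
  symmetry. apply (frac_part_eq _ _ (Int_part (y - p) + n)); [lra|].
  unfold dS1. rewrite plus_IZR. pose proof (Rplus_Int_part_frac_part (y - p)). unfold d. lra.
Qed.

Lemma continuity_pt_eps_delta f x : continuity_pt f x <->
  forall eps, 0 < eps -> exists d, 0 < d /\ forall y, Rabs (y - x) < d -> Rabs (f y - f x) < eps.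
Proof.
  unfold continuity_pt, continue_in, limit1_in, limit_in, D_x, no_cond; simpl; unfold R_dist.
  split.
  - intros Hf eps Heps. destruct (Hf eps Heps) as [d [Hd Hfd]]. exists d. split; [exact Hd|].
    intros y Hy. destruct (Req_dec x y) as [<- | Hxy].
    + rewrite Rminus_diag, Rabs_R0. exact Heps.
    + apply Hfd. auto.
  - intros Hf eps Heps. destruct (Hf eps Heps) as [d [Hd Hfd]]. exists d. split; [exact Hd|].
    intros y [_ Hy]. auto.
Qed.

Lemma continuous_periodic_antipodal_eq F : continuity F -> F 1 = F 0 ->
  exists t, F t = F (t + / 2).
Proof.
  intros HF HF1. set (G := fun t => F t - F (t + / 2)).
  assert (HG : continuity G).
  { apply continuity_minus; [exact HF|].
    apply (continuity_comp (fun t => t + / 2) F); [| exact HF].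
    apply continuity_plus; [apply derivable_continuous, derivable_id |].
    apply continuity_const. intros a b. reflexivity. }
  assert (HG_half : G (/ 2) = - G 0).
  { unfold G. replace (/ 2 + / 2) with 1 by field. rewrite HF1, Rplus_0_l. ring. }
  destruct (IVT_cor G 0 (/ 2) HG) as [t [_ Ht]]; [lra | |].
  - rewrite HG_half. pose proof (Rle_0_sqr (G 0)). unfold Rsqr in *. lra.
  - exists t. unfold G in Ht. lra.
Qed.

Lemma dS1_continuous_off p y : inS1 p -> inS1 y -> y <> p ->
  forall eps, 0 < eps -> exists d, 0 < d /\
    forall y', circ_dist y y' < d -> Rabs (dS1 p y' - dS1 p y) < eps.
Proof.
  intros Hp Hy Hyp eps Heps.
  pose proof (dS1_pos p y Hp Hy Hyp). pose proof (dS1_bounds p y).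
  exists (Rmin eps (Rmin (dS1 p y) (1 - dS1 p y))).
  split; [repeat apply Rmin_glb_lt; lra|]. intros y' Hy'.
  pose proof (Rmin_l eps (Rmin (dS1 p y) (1 - dS1 p y))).
  pose proof (Rmin_r eps (Rmin (dS1 p y) (1 - dS1 p y))).
  pose proof (Rmin_l (dS1 p y) (1 - dS1 p y)). pose proof (Rmin_r (dS1 p y) (1 - dS1 p y)).
  rewrite dS1_near; lra.
Qed.

(* A continuous injection h of the circle missing a point p would make
   [t |-> dS1 p (h t)] a continuous injection of the circle into the reals,
   which is impossible since it takes equal values at two antipodal points. *)
Lemma homeomorphic_circle_full V : (forall x, V x -> inS1 x) -> homeomorphic inS1 V ->
  forall p, inS1 p -> V p.
Proof.
  intros HV [h [k [[Hh_maps Hh_cont] [_ [Hkh _]]]]] p Hp.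
  destruct (classic (V p)) as [HpV | HpV]; [exact HpV | exfalso].
  set (F := fun t => dS1 p (h (ccw_point 0 t))).
  assert (HF : continuity F).
  { intros t. apply continuity_pt_eps_delta. intros eps Heps.
    assert (Hht : V (h (ccw_point 0 t))) by apply Hh_maps, ccw_point_inS1.
    assert (Hhp : h (ccw_point 0 t) <> p) by (intros Heq; apply HpV; rewrite <- Heq; exact Hht).
    destruct (dS1_continuous_off p _ Hp (HV _ Hht) Hhp eps Heps) as [d1 [Hd1 Hdist]].
    destruct (Hh_cont _ (ccw_point_inS1 0 t) d1 Hd1) as [d [Hd Hh]].
    exists d. split; [exact Hd|]. intros t' Ht'. apply Hdist, Hh; [apply ccw_point_inS1|].
    eapply Rle_lt_trans; [apply circ_dist_ccw_point|].
    rewrite circ_dist_refl. lra. }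
  assert (HF1 : F 1 = F 0).
  { unfold F. now rewrite <- (ccw_point_add_int 0 0 1), Rplus_0_l. }
  destruct (continuous_periodic_antipodal_eq F HF HF1) as [t Ht].
  assert (Hpts : ccw_point 0 t = ccw_point 0 (t + / 2)).
  { rewrite <- (Hkh _ (ccw_point_inS1 0 t)), <- (Hkh _ (ccw_point_inS1 0 (t + / 2))).
    f_equal. apply (dS1_inj p); [apply HV, Hh_maps, ccw_point_inS1 .. | exact Ht]. }
  pose proof (dS1_ccw_point 0 t (t + / 2)) as Hhalf. rewrite <- Hpts, dS1_self in Hhalf. lra.
Qed.

Lemma real_Lub_Rbar_unit_interval (S : R -> Prop) : (forall s, S s -> 0 <= s <= 1) ->
  0 <= real (Lub_Rbar S) <= 1 /\
  forall t, 0 <= t < real (Lub_Rbar S) -> exists s, S s /\ t < s.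
Proof.
  intros HS. destruct (Lub_Rbar_correct S) as [Hub Hlub].
  assert (H1 : Rbar_le (Lub_Rbar S) 1) by (apply Hlub; intros s Hs; apply HS, Hs).
  destruct (Lub_Rbar S) as [l | |]; simpl in *; [| contradiction | split; intros; lra].
  split.
  - split; [| exact H1]. destruct (classic (exists s, S s)) as [[s Hs] | Hempty].
    + pose proof (Hub s Hs). pose proof (HS s Hs). simpl in *. lra.
    + exfalso. apply (Hlub m_infty). intros s Hs. exfalso. eauto.
  - intros t Ht. apply NNPP. intros Hnone.
    assert (Hlt : l <= t); [apply (Hlub (Finite t)) | lra].
    intros s Hs. simpl. apply Rnot_lt_le. eauto.
Qed.

Lemma gamma_1_spec E u : 0 <= gamma_m E 1 u <= 1 /\
  forall t, 0 <= t < gamma_m E 1 u -> exists v, E u v /\ t < dS1 u v.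
Proof.
  set (S := fun s => exists u0 : nat -> R, u0 O = u /\ is_path E u0 1 /\ s = path_len u0 1).
  assert (Hstep : forall s, S s -> exists v, E u v /\ s = dS1 u v).
  { intros s [u0 [Hu0 [Hpath ->]]]. exists (u0 1%nat). simpl. rewrite <- Hu0.
    split; [apply Hpath; lia | ring]. }
  destruct (real_Lub_Rbar_unit_interval S) as [Hbounds Happrox].
  { intros s Hs. destruct (Hstep s Hs) as [v [_ ->]]. pose proof (dS1_bounds u v). lra. }
  split; [exact Hbounds|]. intros t Ht. destruct (Happrox t Ht) as [s [Hs Hts]].
  destruct (Hstep s Hs) as [v [Huv ->]]. eauto.
Qed.

Definition strictly_increasing_on (P : R -> Prop) (f : R -> R) : Prop :=
  forall s t, P s -> P t -> s < t -> f s < f t.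

Lemma strictly_increasing_on_lt P f s t : strictly_increasing_on P f -> P s -> P t ->
  f s < f t -> s < t.
Proof.
  intros Hf Hs Ht Hlt. destruct (Rtotal_order s t) as [Hst | [-> | Hts]]; [exact Hst | lra |].
  pose proof (Hf t s Ht Hs Hts). lra.
Qed.

Lemma strictly_increasing_on_inj P f s t : strictly_increasing_on P f -> P s -> P t ->
  f s = f t -> s = t.
Proof.
  intros Hf Hs Ht Heq. destruct (Rtotal_order s t) as [Hst | [-> | Hts]]; [| reflexivity |].
  - pose proof (Hf s t Hs Ht Hst). lra.
  - pose proof (Hf t s Ht Hs Hts). lra.
Qed.

Lemma continuity_pt_le_of_near f x c : continuity_pt f x ->
  (forall d, 0 < d -> exists y, Rabs (y - x) < d /\ f y <= c) -> f x <= c.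
Proof.
  intros Hf Hnear. apply Rnot_lt_le. intros Hlt.
  destruct (proj1 (continuity_pt_eps_delta f x) Hf (f x - c)) as [d [Hd Hfd]]; [lra|].
  destruct (Hnear d Hd) as [y [Hy Hfy]]. specialize (Hfd y Hy). apply Rabs_def2 in Hfd. lra.
Qed.

Lemma continuity_pt_ge_of_near f x c : continuity_pt f x ->
  (forall d, 0 < d -> exists y, Rabs (y - x) < d /\ c <= f y) -> c <= f x.
Proof.
  intros Hf Hnear. apply Ropp_le_cancel.
  apply (continuity_pt_le_of_near (fun y => - f y)); [now apply continuity_pt_opp|].
  intros d Hd. destruct (Hnear d Hd) as [y [Hy Hfy]]. exists y. split; [exact Hy | lra].
Qed.

(* Strict monotonicity passes from the interior to the closed interval:
   [f s <= f m1 < f m2 <= f t] for interior points [s < m1 < m2 < t]. *)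
Lemma strictly_increasing_on_closure a b f : continuity f ->
  strictly_increasing_on (fun x => a < x < b) f ->
  strictly_increasing_on (fun x => a <= x <= b) f.
Proof.
  intros Hf Hint s t Hs Ht Hst.
  set (m1 := s + (t - s) / 3). set (m2 := s + 2 * (t - s) / 3).
  assert (Hs_m1 : f s <= f m1).
  { apply continuity_pt_le_of_near; [apply Hf|]. intros d Hd.
    pose proof (Rmin_l (d / 2) ((t - s) / 6)). pose proof (Rmin_r (d / 2) ((t - s) / 6)).
    assert (0 < Rmin (d / 2) ((t - s) / 6)) by (apply Rmin_glb_lt; lra).
    exists (s + Rmin (d / 2) ((t - s) / 6)). split.
    - rewrite Rabs_right; lra.
    - left. apply Hint; unfold m1; lra. }
  assert (Hm2_t : f m2 <= f t).
  { apply continuity_pt_ge_of_near; [apply Hf|]. intros d Hd.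
    pose proof (Rmin_l (d / 2) ((t - s) / 6)). pose proof (Rmin_r (d / 2) ((t - s) / 6)).
    assert (0 < Rmin (d / 2) ((t - s) / 6)) by (apply Rmin_glb_lt; lra).
    exists (t - Rmin (d / 2) ((t - s) / 6)). split.
    - rewrite Rabs_left; lra.
    - left. apply Hint; unfold m2; lra. }
  assert (f m1 < f m2) by (apply Hint; unfold m1, m2; lra).
  lra.
Qed.

Lemma epsilon_unique_witness {A : Type} (i : inhabited A) (P : A -> Prop) (a : A) :
  P a -> (forall b, P b -> b = a) ->
  epsilon i (fun w => P w /\ forall w', P w' -> w' = w) = a.
Proof.
  intros Ha Huniq. apply Huniq. apply (epsilon_spec i (fun w => P w /\ forall w', P w' -> w' = w)).
  exists a. split; [exact Ha | exact Huniq].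
Qed.

Lemma metric_quadrilateral V dV a b c d : metric_on V dV -> V a -> V b -> V c -> V d ->
  Rabs (dV a b - dV c d) <= dV a c + dV b d.
Proof.
  intros [_ [_ [Hsym Htri]]] Ha Hb Hc Hd. apply Rabs_le.
  pose proof (Htri a c b Ha Hc Hb). pose proof (Htri c d b Hc Hd Hb).
  pose proof (Htri c a d Hc Ha Hd). pose proof (Htri a b d Ha Hb Hd).
  rewrite (Hsym c a), (Hsym d b) in * by assumption. lra.
Qed.

Lemma metric_jointly_continuous V dV : metric_on V dV -> induces_subspace_topology V dV ->
  forall u x, V u -> V x -> forall eps, 0 < eps -> exists d, 0 < d /\
    forall v y, V v -> V y -> circ_dist u v < d -> circ_dist x y < d ->
      Rabs (dV v y - dV u x) < eps.
Proof.
  intros Hm [Htop _] u x Hu Hx eps Heps.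
  destruct (Htop u Hu (eps / 2)) as [d1 [Hd1 H1]]; [lra|].
  destruct (Htop x Hx (eps / 2)) as [d2 [Hd2 H2]]; [lra|].
  exists (Rmin d1 d2). split; [now apply Rmin_glb_lt|].
  intros v y Hv Hy Huv Hxy. pose proof (Rmin_l d1 d2). pose proof (Rmin_r d1 d2).
  specialize (H1 v Hv ltac:(lra)). specialize (H2 y Hy ltac:(lra)).
  pose proof (metric_quadrilateral V dV v y u x Hm Hv Hy Hu Hx).
  destruct Hm as [_ [_ [Hsym _]]]. rewrite (Hsym v u), (Hsym y x) in * by assumption. lra.
Qed.

Section HittingTime.

Variables (V : R -> Prop) (E : R -> R -> Prop) (dV : R -> R -> R) (r : R).
Hypothesis V_circle : forall x, V x <-> inS1 x.
Hypothesis G_cyclic : cyclic_graph V E.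
Hypothesis G_continuous : continuous_graph V E.
Hypothesis G_metric : metric_graph_with V E dV.
Hypothesis r_pos : 0 < r.
Hypothesis r_le_gamma_V : forall u, V u -> r <= gamma_V E dV u.

Let L (u : R) : R := gamma_m E 1 u.
Let D (u t : R) : R := dV u (ccw_point u t).

Lemma ccw_point_in_V u t : V (ccw_point u t).
Proof. apply V_circle, ccw_point_inS1. Qed.

Lemma L_continuous u : V u -> forall eps, 0 < eps -> exists d, 0 < d /\
  forall v, V v -> circ_dist u v < d -> Rabs (L v - L u) < eps.
Proof. exact (G_continuous 1%nat (le_n 1) u). Qed.

Lemma L_bounds u : V u -> 0 < L u < 1.
Proof.
  intros Hu. destruct (gamma_1_spec E u) as [[HL0 HL1] _].
  pose proof (r_le_gamma_V u Hu) as Hr.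
  change (r <= dV u (ccw_point u (L u))) in Hr. change (0 <= L u) in HL0. change (L u <= 1) in HL1.
  assert (Hdegenerate : L u = 0 \/ L u = 1 -> ccw_point u (L u) = u).
  { apply V_circle in Hu. intros [-> | ->]; [| rewrite <- (Rplus_0_l 1), (ccw_point_add_int u 0 1)];
      now apply ccw_point_0. }
  destruct G_metric as [[_ [Hzero _]] _]. assert (Huu : dV u u = 0) by now apply Hzero.
  destruct (Req_dec (L u) 0) as [H0 | H0]; [rewrite Hdegenerate in Hr; lra|].
  destruct (Req_dec (L u) 1) as [H1 | H1]; [rewrite Hdegenerate in Hr; lra|].
  lra.
Qed.

Lemma D_zero u : V u -> D u 0 = 0.
Proof.
  intros Hu. unfold D. rewrite ccw_point_0 by now apply V_circle.
  destruct G_metric as [[_ [Hzero _]] _]. now apply Hzero.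
Qed.

Lemma D_continuous u : V u -> continuity (D u).
Proof.
  intros Hu t. apply continuity_pt_eps_delta. intros eps Heps.
  destruct G_metric as [Hm [Htop _]].
  destruct (metric_jointly_continuous V dV Hm Htop u (ccw_point u t) Hu (ccw_point_in_V u t)
              eps Heps) as [d [Hd Hclose]].
  exists d. split; [exact Hd|]. intros t' Ht'. unfold D.
  apply Hclose; [exact Hu | apply ccw_point_in_V | rewrite circ_dist_refl; lra |].
  eapply Rle_lt_trans; [apply circ_dist_ccw_point|]. rewrite circ_dist_refl. lra.
Qed.

Lemma D_continuous_base u t : V u -> forall eps, 0 < eps -> exists d, 0 < d /\
  forall v, V v -> circ_dist u v < d -> Rabs (D v t - D u t) < eps.
Proof.
  intros Hu eps Heps. destruct G_metric as [Hm [Htop _]].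
  destruct (metric_jointly_continuous V dV Hm Htop u (ccw_point u t) Hu (ccw_point_in_V u t)
              eps Heps) as [d [Hd Hclose]].
  exists d. split; [exact Hd|]. intros v Hv Huv. unfold D.
  apply Hclose; [exact Hv | apply ccw_point_in_V | exact Huv |].
  eapply Rle_lt_trans; [apply circ_dist_ccw_point|]. rewrite Rminus_diag, Rabs_R0. lra.
Qed.

(* Below the length of the longest edge out of u, the points of the arc are
   joined by edges u -> w1 -> w2 (cyclicity), so the metric condition applies. *)
Lemma D_strictly_increasing_interior u : V u ->
  strictly_increasing_on (fun t => 0 < t < L u) (D u).
Proof.
  intros Hu s t [Hs0 HsL] [Ht0 HtL] Hst.
  destruct (proj2 (gamma_1_spec E u) t) as [v [Huv Htv]]; [unfold L in *; lra|].
  destruct G_cyclic as [[_ [Hedge _]] Hcyc]. destruct G_metric as [_ [_ Hmono]].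
  pose proof (L_bounds u Hu). pose proof (dS1_bounds u v).
  assert (Hv : inS1 v) by apply V_circle, (Hedge u v Huv).
  destruct (Hcyc u v Huv (ccw_point u s) (ccw_point_in_V u s)) as [Hus Hsv].
  { unfold ccw_between. rewrite dS1_to_ccw_point by (apply V_circle in Hu; auto; lra). lra. }
  destruct (Hcyc _ _ Hsv (ccw_point u t) (ccw_point_in_V u t)) as [Hst' _].
  { unfold ccw_between. rewrite <- (ccw_point_dS1 u v Hv). rewrite !dS1_ccw_point; lra. }
  exact (Hmono _ _ _ Hus Hst').
Qed.

Lemma D_strictly_increasing u : V u ->
  strictly_increasing_on (fun t => 0 <= t <= L u) (D u).
Proof.
  intros Hu. apply strictly_increasing_on_closure;
    [apply D_continuous | apply D_strictly_increasing_interior]; exact Hu.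
Qed.

Lemma hitting_time_exists u : V u -> exists T, 0 < T <= L u /\ D u T = r.
Proof.
  intros Hu. pose proof (L_bounds u Hu). pose proof (D_zero u Hu).
  assert (Hend : r <= D u (L u)) by exact (r_le_gamma_V u Hu).
  destruct (IVT_cor (fun t => D u t - r) 0 (L u)) as [T [HT HDT]]; [| lra | |].
  - apply continuity_minus; [now apply D_continuous | now apply continuity_const].
  - cbv beta. nra.
  - exists T. split; [| lra]. split; [| lra].
    destruct (Req_dec T 0) as [-> | HT0]; lra.
Qed.

Lemma g_r_hitting_time u T : V u -> 0 <= T <= L u -> D u T = r ->
  g_r V E dV r u = ccw_point u T.
Proof.
  intros Hu HT HDT. pose proof (L_bounds u Hu). apply V_circle in Hu as Hu'.
  assert (Harc_end : dS1 u (f1 E u) = L u) by (apply dS1_to_ccw_point; [exact Hu' | lra]).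
  apply epsilon_unique_witness.
  - split; [split|]; [apply ccw_point_in_V | | exact HDT].
    rewrite Harc_end, dS1_to_ccw_point by (assumption || lra). lra.
  - intros w [[Hw Harc] Hwr]. rewrite Harc_end in Harc. apply V_circle in Hw.
    rewrite <- (ccw_point_dS1 u w Hw). f_equal.
    pose proof (dS1_bounds u w).
    apply (strictly_increasing_on_inj _ (D u) _ _ (D_strictly_increasing u Hu)); [lra | exact HT |].
    unfold D in *. rewrite ccw_point_dS1 by exact Hw. congruence.
Qed.

Lemma hitting_time_lower_semicontinuous u T : V u -> 0 < T <= L u -> D u T = r ->
  forall eta, 0 < eta -> exists d, 0 < d /\ forall v Tv, V v -> circ_dist u v < d ->
    0 <= Tv <= L v -> D v Tv = r -> T - eta < Tv.
Proof.
  intros Hu HT HDT eta Heta.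
  set (t1 := T - Rmin eta T).
  pose proof (Rmin_l eta T). pose proof (Rmin_r eta T).
  assert (0 < Rmin eta T) by now apply Rmin_glb_lt.
  assert (HD1 : D u t1 < r)
    by (rewrite <- HDT; apply (D_strictly_increasing u Hu); unfold t1; lra).
  destruct (D_continuous_base u t1 Hu (r - D u t1)) as [d1 [Hd1 HDclose]]; [lra|].
  destruct (L_continuous u Hu (T - t1)) as [d2 [Hd2 HLclose]]; [unfold t1; lra|].
  exists (Rmin d1 d2). split; [now apply Rmin_glb_lt|].
  intros v Tv Hv Huv HTv HDTv. pose proof (Rmin_l d1 d2). pose proof (Rmin_r d1 d2).
  specialize (HDclose v Hv ltac:(lra)). specialize (HLclose v Hv ltac:(lra)).
  apply Rabs_def2 in HDclose. apply Rabs_def2 in HLclose.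
  enough (t1 < Tv) by (unfold t1 in *; lra).
  apply (strictly_increasing_on_lt _ (D v) _ _ (D_strictly_increasing v Hv));
    [unfold t1 in *; lra | exact HTv | lra].
Qed.

Lemma hitting_time_upper_semicontinuous u T : V u -> 0 <= T <= L u -> D u T = r ->
  forall eta, 0 < eta -> exists d, 0 < d /\ forall v Tv, V v -> circ_dist u v < d ->
    0 <= Tv <= L v -> D v Tv = r -> Tv < T + eta.
Proof.
  intros Hu HT HDT eta Heta.
  destruct (Req_dec T (L u)) as [HTL | HTL].
  - destruct (L_continuous u Hu eta Heta) as [d [Hd HLclose]].
    exists d. split; [exact Hd|]. intros v Tv Hv Huv HTv _.
    specialize (HLclose v Hv Huv). apply Rabs_def2 in HLclose. lra.
  - set (t2 := T + Rmin eta (L u - T) / 2).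
    pose proof (Rmin_l eta (L u - T)). pose proof (Rmin_r eta (L u - T)).
    assert (0 < Rmin eta (L u - T)) by (apply Rmin_glb_lt; lra).
    assert (HD2 : r < D u t2)
      by (rewrite <- HDT; apply (D_strictly_increasing u Hu); unfold t2; lra).
    destruct (D_continuous_base u t2 Hu (D u t2 - r)) as [d1 [Hd1 HDclose]]; [lra|].
    destruct (L_continuous u Hu (L u - t2)) as [d2 [Hd2 HLclose]]; [unfold t2; lra|].
    exists (Rmin d1 d2). split; [now apply Rmin_glb_lt|].
    intros v Tv Hv Huv HTv HDTv. pose proof (Rmin_l d1 d2). pose proof (Rmin_r d1 d2).
    specialize (HDclose v Hv ltac:(lra)). specialize (HLclose v Hv ltac:(lra)).
    apply Rabs_def2 in HDclose. apply Rabs_def2 in HLclose.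
    enough (Tv < t2) by (unfold t2 in *; lra).
    apply (strictly_increasing_on_lt _ (D v) _ _ (D_strictly_increasing v Hv));
      [exact HTv | unfold t2 in *; lra | lra].
Qed.

Lemma g_r_continuous : cont_on V V (g_r V E dV r).
Proof.
  split.
  - intros u Hu. destruct (hitting_time_exists u Hu) as [T [HT HDT]].
    rewrite (g_r_hitting_time u T Hu ltac:(lra) HDT). apply ccw_point_in_V.
  - intros u Hu eps Heps. destruct (hitting_time_exists u Hu) as [T [HT HDT]].
    destruct (hitting_time_lower_semicontinuous u T Hu HT HDT (eps / 3)) as [d1 [Hd1 Hlo]]; [lra|].
    destruct (hitting_time_upper_semicontinuous u T Hu ltac:(lra) HDT (eps / 3))
      as [d2 [Hd2 Hhi]]; [lra|].
    exists (Rmin (Rmin d1 d2) (eps / 3)). split; [repeat apply Rmin_glb_lt; lra|].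
    intros v Hv Huv. destruct (hitting_time_exists v Hv) as [Tv [HTv HDTv]].
    pose proof (Rmin_l (Rmin d1 d2) (eps / 3)). pose proof (Rmin_r (Rmin d1 d2) (eps / 3)).
    pose proof (Rmin_l d1 d2). pose proof (Rmin_r d1 d2).
    specialize (Hlo v Tv Hv ltac:(lra) ltac:(lra) HDTv).
    specialize (Hhi v Tv Hv ltac:(lra) ltac:(lra) HDTv).
    rewrite (g_r_hitting_time u T Hu ltac:(lra) HDT), (g_r_hitting_time v Tv Hv ltac:(lra) HDTv).
    eapply Rle_lt_trans; [apply circ_dist_ccw_point|].
    assert (Rabs (Tv - T) < eps / 3) by (apply Rabs_def1; lra). lra.
Qed.

End HittingTime.

Lemma g_r_zero V E dV u : metric_on V dV -> V u -> g_r V E dV 0 u = u.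
Proof.
  intros [_ [Hzero _]] Hu. apply epsilon_unique_witness.
  - split; [split|]; [exact Hu | rewrite dS1_self; apply dS1_bounds | now apply Hzero].
  - intros w [[Hw _] Hw0]. symmetry. now apply Hzero.
Qed.

Theorem lemma4p6 (V : R -> Prop) (E : R -> R -> Prop) (dV : R -> R -> R)
  (Hcyc : cyclic_graph V E)
  (Hclosed : closed_in_S1 V)
  (Hcont : continuous_graph V E)
  (Hmetric : metric_graph_with V E dV)
  (Hhomeo : homeomorphic inS1 V)
  (gamma : R)
  (Hgamma : is_inf (fun s => exists u, V u /\ s = gamma_V E dV u) gamma) :
  forall r, 0 <= r <= gamma -> cont_on V V (g_r V E dV r).
Proof.
  intros r [[Hr | <-] Hr_gamma].
  - assert (HV_sub : forall x, V x -> inS1 x) by exact (proj1 (proj1 Hcyc)).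
    apply g_r_continuous; try assumption.
    + intros x. split; [apply HV_sub | apply homeomorphic_circle_full; assumption].
    + intros u Hu. apply Rle_trans with gamma; [exact Hr_gamma|]. apply (proj1 Hgamma). eauto.
  - split; intros u Hu; rewrite (g_r_zero V E dV u (proj1 Hmetric) Hu); [exact Hu|].
    intros eps Heps. exists eps. split; [exact Heps|]. intros v Hv Huv.
    now rewrite (g_r_zero V E dV v (proj1 Hmetric) Hv).
Qed.
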